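(* Let $X$ be an exponential vector space over a field $K$. If $x\in Q(X)$, then $L(x)=L(y)$ for every $y\in X\smallsetminus X_0$ with $y\leq x$.
   Context: An exponential vector space (evs) over a field $K$ is a partially ordered set $(X,\leq)$ with a binary operation $+$ on $X$ and a map $K\times X\to X$, $(\alpha,x)\mapsto \alpha x$, such that: (A1) $(X,+)$ is a commutative semigroup with identity $\theta$; (A2) $x\leq y$ implies $x+z\leq y+z$ and $\alpha x\leq \alpha y$ for all $z\in X$, $\alpha\in K$; (A3) $\alpha(x+y)=\alpha x+\alpha y$, $\alpha(\beta x)=(\alpha\beta)x$, $(\alpha+\beta)x\leq \alpha x+\beta x$, $1x=x$; (A4) $\alpha x=\theta$ iff $\alpha=0$ or $x=\theta$; (A5) $x+(-1)x=\theta$ iff $x\in X_0$, where $X_0:=\{z\in X: y\not\leq z \text{ for all } y\in X\smallsetminus\{z\}\}$ (the set of minimal elements, called the primitive space; it is a vector space over $K$); (A6) for each $x\in X$ there is $p\in X_0$ with $p\leq x$. For $x\in X\smallsetminus X_0$ let $L(x):=\{z\in X: z\geq \alpha x+p \text{ for some } \alpha\in K\smallsetminus\{0\},\ p\in X_0\}$. For $x\in X$ write $\downarrow x:=\{z\in X: z\leq x\}$. The feasible set is $Q(X):=\{x\in X\smallsetminus X_0: (\downarrow x\smallsetminus X_0)\subseteq L(x)\}$. *)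

From mathcomp Require Import all_boot all_algebra.
Set Implicit Arguments. Unset Strict Implicit. Unset Printing Implicit Defensive.
Import GRing.Theory.
Local Open Scope ring_scope.

Record evs (K : fieldType) : Type := Evs {
  carrier :> Type;
  le : carrier -> carrier -> Prop;
  add : carrier -> carrier -> carrier;
  theta : carrier;
  scal : K -> carrier -> carrier;
  le_refl : forall x, le x x;
  le_antisym : forall x y, le x y -> le y x -> x = y;
  le_trans : forall x y z, le x y -> le y z -> le x z;
  addA : forall x y z, add x (add y z) = add (add x y) z;
  addC : forall x y, add x y = add y x;
  add0 : forall x, add x theta = x;
  le_add : forall x y z, le x y -> le (add x z) (add y z);
  le_scal : forall (a : K) x y, le x y -> le (scal a x) (scal a y);
  scal_add : forall (a : K) x y, scal a (add x y) = add (scal a x) (scal a y);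
  scal_scal : forall (a b : K) x, scal a (scal b x) = scal (a * b) x;
  scal_addK : forall (a b : K) x, le (scal (a + b) x) (add (scal a x) (scal b x));
  scal1 : forall x, scal 1 x = x;
  scal_eq0 : forall (a : K) x, scal a x = theta <-> (a = 0 \/ x = theta);
  inv_prim : forall x, add x (scal (-1) x) = theta <->
                 (forall y, y <> x -> ~ le y x);
  prim_below : forall x, exists p, (forall y, y <> p -> ~ le y p) /\ le p x
}.

Section Defs.
Variables (K : fieldType) (X : evs K).

Definition primitive (z : X) : Prop := forall y : X, y <> z -> ~ le y z.

Definition Lset (x : X) : X -> Prop :=
  fun z => exists (a : K) (p : X), a != 0 /\ primitive p /\ le (add (scal a x) p) z.

Definition feasible (x : X) : Prop :=
  ~ primitive x /\ forall z : X, le z x -> ~ primitive z -> Lset x z.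
End Defs.

From Pilot Require Import Defs.
From mathcomp Require Import all_boot all_algebra.
Import GRing.Theory.
Local Open Scope ring_scope.

(* Two facts about L drive the theorem: it is antitone in its argument
   (a y + p <= a x + p when y <= x), and it absorbs its own elements
   (if a x + p <= y and b y + q <= z then (b a) x + (b p + q) <= z, the
   primitive space being a subspace).  Feasibility of x puts every
   nonprimitive y <= x into L(x), so L(x) is contained in L(y), which is contained in L(x). *)

Section ExponentialVectorSpace.
Variables (K : fieldType) (X : evs K).
Implicit Types (x y z p q : X) (a b : K).

Lemma primitiveZ a p : primitive p -> primitive (scal a p).
Proof.
move=> /inv_prim hp; apply/inv_prim.
by rewrite scal_scal mulrC -scal_scal -scal_add hp; apply/scal_eq0; right.
Qed.

Lemma primitiveD p q : primitive p -> primitive q -> primitive (Defs.add p q).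
Proof.
move=> /inv_prim hp /inv_prim hq; apply/inv_prim.
by rewrite scal_add -Defs.addA (Defs.addA q) (Defs.addC q) -(Defs.addA _ q) hq add0.
Qed.

Lemma Lset_le x y z : le y x -> Lset x z -> Lset y z.
Proof.
move=> hyx [a [p [a_neq0 [hp hle]]]]; exists a, p; do 2 split=> //.
by apply: le_trans hle; apply/le_add/le_scal.
Qed.

Lemma Lset_trans x y z : Lset x y -> Lset y z -> Lset x z.
Proof.
move=> [a [p [a_neq0 [hp hxy]]]] [b [q [b_neq0 [hq hyz]]]].
exists (b * a), (Defs.add (scal b p) q); split; first by rewrite mulf_neq0.
split; first by apply/primitiveD/hq/primitiveZ.
apply: le_trans hyz.
by rewrite -scal_scal Defs.addA -scal_add; apply/le_add/le_scal.
Qed.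

End ExponentialVectorSpace.

Theorem mainTheorem17 (K : fieldType) (X : evs K) (x : X) :
  feasible x ->
  forall y : X, ~ primitive y -> le y x ->
    forall z : X, Lset x z <-> Lset y z.
Proof.
move=> [_ x_feasible] y y_nprim hyx z; split; first exact: Lset_le.
exact/Lset_trans/(x_feasible y hyx y_nprim).
Qed.
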